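(* Let $F,S_1,\ldots,S_m,S_a$ be formulas and $1\le i\le m$. If $\emptyset[F,S_1,\ldots,S_{i-1},S_i,\ldots,S_m]=\emptyset[S_1,\ldots,S_{i-1},S_i,\ldots,S_m]$, then $\emptyset[F,S_1,\ldots,S_{i-1},S_a,S_i,\ldots,S_m]=\emptyset[S_1,\ldots,S_{i-1},S_a,S_i,\ldots,S_m]$.
   Context: Propositional models are truth assignments over a finite set of variables; a formula used where a set of models is expected stands for its set of models. A doxastic state is a sequence $[C(0),\ldots,C(k)]$ of nonempty, pairwise disjoint sets of models covering all models. The flat doxastic state $\emptyset$ is $[\text{all models}]$. Lexicographic revision: $C\,\mathrm{lex}(A) = [C(0)\cap A,\ldots,C(k)\cap A, C(0)\setminus A,\ldots,C(k)\setminus A]$, empty sets discarded. $\emptyset[T_1,\ldots,T_n]$ denotes $\emptyset$ revised lexicographically by $T_1$, then $T_2$, ..., then $T_n$. *)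

From mathcomp Require Import all_boot.
Set Implicit Arguments. Unset Strict Implicit. Unset Printing Implicit Defensive.

Definition model (n : nat) := {ffun 'I_n -> bool}.

Inductive formula (n : nat) : Type :=
| FVar of 'I_n
| FTrue
| FFalse
| FNot of formula n
| FAnd of formula n & formula n
| FOr of formula n & formula n.

Fixpoint holds n (w : model n) (f : formula n) : bool :=
  match f with
  | FVar x => w x
  | FTrue => true
  | FFalse => false
  | FNot g => ~~ holds w g
  | FAnd g h => holds w g && holds w h
  | FOr g h => holds w g || holds w h
  end.

Definition mods n (f : formula n) : {set model n} := [set w | holds w f].

(* A doxastic state: a sequence [C(0);...;C(k)] of sets of models. *)
Notation dstate n := (seq {set model n}).

Definition is_doxastic n (C : dstate n) : Prop :=
  [/\ all (fun X => X != set0) C,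
      (forall i j, i < size C -> j < size C -> i != j ->
          [disjoint nth set0 C i & nth set0 C j]) &
      (forall w : model n, has (fun X : {set model n} => w \in X) C)].

Definition flat n : dstate n := [:: [set: model n]].

Definition lex n (C : dstate n) (A : {set model n}) : dstate n :=
  [seq X <- [seq X :&: A | X <- C] ++ [seq X :\: A | X <- C] | X != set0].

(* emptyset[T1,...,Tn] : flat state revised successively by T1, ..., Tn. *)
Definition revise_seq n (Ts : seq (formula n)) : dstate n :=
  foldl (fun C T => lex C (mods T)) (flat n) Ts.

(* Revising first by F splits every cell K of the state obtained from the
   remaining formulas into F /\ K and ~F /\ K, in place, since later lexicographic
   revisions only intersect cells with further sets.  Discarding empty cells,
   this leaves the state unchanged exactly when every cell lies inside F or
   inside ~F.  Inserting one more revision S_a only cuts cells into smaller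
   pieces, and pieces of cells inside F (or ~F) still lie inside F (or ~F). *)
From mathcomp Require Import all_boot.
Set Implicit Arguments. Unset Strict Implicit. Unset Printing Implicit Defensive.

Section Refinement.
Variable T : finType.
Implicit Types (A K X : {set T}) (C D As : seq {set T}).

Definition refine C A := [seq K :&: A | K <- C] ++ [seq K :\: A | K <- C].

Definition prune C := [seq K <- C | K != set0].

Definition split_cells A C := flatten [seq [:: A :&: K; ~: A :&: K] | K <- C].

Definition homogeneous A K := (K \subset A) || (K \subset ~: A).

Definition refines D C := {in D, forall K', exists2 K, K \in C & K' \subset K}.

Lemma prune_cat C D : prune (C ++ D) = prune C ++ prune D.
Proof. exact: filter_cat. Qed.

Lemma prune_map (f : {set T} -> {set T}) C :
  f set0 = set0 -> prune [seq f K | K <- prune C] = prune (map f C).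
Proof.
move=> f0; elim: C => //= K C IH.
by have [->|_] := eqVneq K set0; rewrite /= ?f0 ?eqxx /= IH.
Qed.

Lemma prune_refine C A : prune (refine (prune C) A) = prune (refine C A).
Proof. by rewrite /refine !prune_cat !prune_map ?set0I ?set0D. Qed.

Lemma foldl_refine_meet C As :
  foldl refine C As =
  flatten [seq [seq X :&: K | X <- C] | K <- foldl refine [:: setT] As].
Proof.
elim/last_ind: As => [|As A IH] /=.
  by rewrite cats0 -[LHS]map_id; apply: eq_map => X; rewrite setIT.
rewrite !foldl_rcons IH /refine map_cat flatten_cat !map_flatten -!map_comp.
congr (flatten _ ++ flatten _); apply: eq_map => K /=; rewrite -map_comp;
  by apply: eq_map => X /=; rewrite ?setIA // !setDE setIA.
Qed.

Lemma subset_setCI_eq0 A K : (K \subset A) = (~: A :&: K == set0).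
Proof. by rewrite setI_eq0 disjoint_sym disjoints_subset setCK. Qed.

Lemma subsetC_setI_eq0 A K : (K \subset ~: A) = (A :&: K == set0).
Proof. by rewrite setI_eq0 disjoint_sym disjoints_subset. Qed.

Lemma count_split_cell A K :
  count (fun X => X != set0) [:: A :&: K; ~: A :&: K] =
  (K != set0) + ~~ homogeneous A K.
Proof.
have nzK : (K != set0) = (A :&: K != set0) || (~: A :&: K != set0).
  by rewrite -negb_and -setU_eq0 -setIUl setUCr setTI.
rewrite nzK /homogeneous subset_setCI_eq0 subsetC_setI_eq0 /=.
by case: eqP; case: eqP.
Qed.

Lemma prune_split_homogeneous A K :
  homogeneous A K -> prune [:: A :&: K; ~: A :&: K] = prune [:: K].
Proof.
case/orP=> subK.
- have -> : A :&: K = K by apply/setIidPr.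
  by move: subK; rewrite subset_setCI_eq0 => /eqP->; rewrite /prune /= eqxx.
- have -> : ~: A :&: K = K by apply/setIidPr.
  by move: subK; rewrite subsetC_setI_eq0 => /eqP->; rewrite /prune /= eqxx.
Qed.

Lemma count_split_cells A C :
  count (fun X => X != set0) (split_cells A C) =
  count (fun X => X != set0) C + count (predC (homogeneous A)) C.
Proof.
elim: C => // K C IH.
rewrite (count_cat _ [:: A :&: K; ~: A :&: K]) IH count_split_cell /=.
by rewrite addnACA.
Qed.

Lemma prune_split_cellsP A C :
  prune (split_cells A C) = prune C <-> all (homogeneous A) C.
Proof.
split=> [eqAC | homC].
- have /eqP := congr1 size eqAC.
  rewrite !size_filter count_split_cells -[X in _ == X]addn0 eqn_add2l.
  by rewrite -[all _ _]negbK -has_predC has_count => /eqP->.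
- elim: C homC => // K C IH /andP[homK homC].
  rewrite (prune_cat [:: A :&: K; ~: A :&: K]) prune_split_homogeneous // IH //.
  by rewrite [RHS](prune_cat [:: K]).
Qed.

Lemma homogeneousS A K K' : K' \subset K -> homogeneous A K -> homogeneous A K'.
Proof.
by move=> subK /orP[] /(subset_trans subK) subK'; rewrite /homogeneous subK' ?orbT.
Qed.

Lemma refines_all_homogeneous A D C :
  refines D C -> all (homogeneous A) C -> all (homogeneous A) D.
Proof.
move=> DC /allP homC; apply/allP=> K' /DC[K /homC homK subK].
exact: homogeneousS homK.
Qed.

Lemma refine_refines C A : refines (refine C A) C.
Proof.
move=> K'; rewrite mem_cat => /orP[] /mapP[K KC ->];
  by exists K; rewrite ?subsetIl ?subsetDl.
Qed.

Lemma refines_refine D C A : refines D C -> refines (refine D A) (refine C A).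
Proof.
move=> DC K'; rewrite mem_cat => /orP[] /mapP[K1 /DC[K KC subK] ->].
- exists (K :&: A); last exact: setSI.
  by rewrite mem_cat (map_f (fun K => K :&: A) KC).
- exists (K :\: A); last exact: setSD.
  by rewrite mem_cat (map_f (fun K => K :\: A) KC) orbT.
Qed.

Lemma refines_foldl D C As :
  refines D C -> refines (foldl refine D As) (foldl refine C As).
Proof. by elim: As D C => //= A As IH D C DC; apply/IH/refines_refine. Qed.

Lemma refines_insert C As Bs A :
  refines (foldl refine C (As ++ A :: Bs)) (foldl refine C (As ++ Bs)).
Proof. by rewrite !foldl_cat /=; apply: refines_foldl; apply: refine_refines. Qed.

End Refinement.

Arguments refine {T}.

Section Revision.
Variable n : nat.
Implicit Types (C : dstate n) (F : formula n) (L : seq (formula n)).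

Definition revise_cells L : dstate n := foldl refine [:: setT] (map (@mods n) L).

Lemma foldl_lex_prune C L :
  foldl (fun D G => lex D (mods G)) (prune C) L =
  prune (foldl refine C (map (@mods n) L)).
Proof. by elim: L C => //= G L IH C; rewrite -IH; congr foldl; apply: prune_refine. Qed.

Lemma revise_seqE L : revise_seq L = prune (revise_cells L).
Proof.
have nz_setT : [set: model n] != set0 by apply/set0Pn; exists [ffun=> true].
by rewrite -foldl_lex_prune /prune /= nz_setT.
Qed.

Lemma revise_seq_cons F L :
  revise_seq (F :: L) = prune (split_cells (mods F) (revise_cells L)).
Proof.
rewrite /revise_seq /= -[lex _ _]/(prune (refine [:: setT] (mods F))).
by rewrite foldl_lex_prune foldl_refine_meet /= setTI setTD.
Qed.

End Revision.

Theorem mainTheorem10 (n : nat) (F Sa : formula n) (S : seq (formula n)) (i : nat) :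
  1 <= i <= size S ->
  revise_seq (F :: take i.-1 S ++ drop i.-1 S) = revise_seq (take i.-1 S ++ drop i.-1 S) ->
  revise_seq (F :: take i.-1 S ++ Sa :: drop i.-1 S) =
  revise_seq (take i.-1 S ++ Sa :: drop i.-1 S).
Proof.
move=> _; rewrite !revise_seq_cons !revise_seqE => /prune_split_cellsP homS.
apply/prune_split_cellsP/(refines_all_homogeneous _ homS).
by rewrite /revise_cells !map_cat; apply: refines_insert.
Qed.
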